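(* Let $S=\{n_0<n_1<n_2<\cdots\}$ be an infinite subset of the positive integers with unbounded gaps, i.e. $\sup_i (n_{i+1}-n_i)=\infty$. Then the $S$-gap shift $X(S)$ does not admit a Gibbs state.
   Context: For nonempty $S$, the $S$-gap shift $X(S)\subseteq\{0,1\}^{\mathbb{Z}}$ is the set of bi-infinite binary sequences in which every maximal block of consecutive zeros (between two ones) has length belonging to $S$; typical points have the form $\cdots10^{n_{-1}}10^{n_0}10^{n_1}\cdots$ with $n_j\in S$. $\mathcal{B}_r(X)$ is the set of words of length $r$ occurring in points of $X$, $h(X)=\lim_r\frac1r\log|\mathcal{B}_r(X)|$ with $\log$ to base $2$, and $[\omega]$ is the cylinder set of points having $\omega$ at a fixed position. A Borel probability measure $\mu$ on $X$ is a Gibbs state if there exist $c_1,c_2>0$ such that for all words $\omega\in\mathcal{B}(X)$ of length $r$, $c_1\le\mu([\omega])\,2^{r h(X)}\le c_2$. *)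

From HB Require Import structures.
From mathcomp Require Import all_boot all_order all_algebra.
From mathcomp Require Import all_classical all_reals all_analysis.
Set Implicit Arguments. Unset Strict Implicit. Unset Printing Implicit Defensive.
Import Order.TTheory GRing.Theory Num.Theory.
Import numFieldNormedType.Exports.
Local Open Scope classical_set_scope.
Local Open Scope ring_scope.

(** Full shift {0,1}^Z ; [true] encodes the symbol 1, [false] the symbol 0.
    It carries the product topology of the discrete topology on [bool]. *)
Definition fullshift : Type := {ptws int -> bool}.

Definition borel_fullshift := g_sigma_algebraType (@open {ptws int -> bool}).

Definition gap_shift (S : set nat) : set fullshift :=
  [set x | forall i j : int, (i < j)%R -> x i = true -> x j = true ->
     (forall k : int, (i < k)%R -> (k < j)%R -> x k = false) ->
     S (absz (j - i - 1)%R) ].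

Definition occurs_at0 (r : nat) (w : r.-tuple bool) (x : fullshift) : Prop :=
  forall i : 'I_r, x (i%:Z) = tnth w i.

Definition cylinder (r : nat) (w : r.-tuple bool) : set fullshift :=
  [set x | occurs_at0 w x].

Definition occurs_in (r : nat) (w : r.-tuple bool) (x : fullshift) : Prop :=
  exists n : int, forall i : 'I_r, x (n + i%:Z) = tnth w i.

Definition language (X : set fullshift) (r : nat) : {set r.-tuple bool} :=
  [set w | `[< exists2 x, X x & occurs_in w x >] ].

Definition log2 {R : realType} (x : R) : R := ln x / ln 2.

Definition entropy {R : realType} (X : set fullshift) : R :=
  limn (fun r : nat => log2 (#|language X r|%:R : R) / r%:R).

(** Gibbs state: a Borel probability measure on X (i.e. giving full mass to X)
    with c1 <= mu([w]) 2^{r h(X)} <= c2 for all words w in B(X). *)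
Definition gibbs_state {R : realType} (X : set fullshift)
    (mu : probability borel_fullshift R) : Prop :=
  mu (X : set borel_fullshift) = 1%E /\
  exists c1 c2 : R, (0 < c1) /\ (0 < c2) /\
    forall (r : nat) (w : r.-tuple bool), w \in language X r ->
      (c1%:E <= mu (cylinder w : set borel_fullshift) * (powR 2 (r%:R * entropy X))%:E)%E /\
      (mu (cylinder w : set borel_fullshift) * (powR 2 (r%:R * entropy X))%:E <= c2%:E)%E.

From HB Require Import structures.
From mathcomp Require Import all_boot all_order all_algebra.
From mathcomp Require Import all_classical all_reals all_analysis.
From mathcomp Require Import zify lra.
Set Implicit Arguments. Unset Strict Implicit. Unset Printing Implicit Defensive.
Import Order.TTheory GRing.Theory Num.Theory.
Local Open Scope classical_set_scope.
Local Open Scope ring_scope.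

(** Write [h] for the entropy and [1 0^p] for the word of length [p+1].
    The Gibbs bounds give [mu [0^k 1] >= c1 2^{-(k+1) h}]; these cylinders are
    pairwise disjoint, so [h > 0].  If no element of [S] lies in [[p, q)], a
    point of [X(S)] starting with [1 0^p] must start with [1 0^q], hence
    [c1 2^{-(p+1) h} <= mu [1 0^p] <= mu [1 0^q] <= c2 2^{-(q+1) h}], i.e.
    [2^{(q-p) h} <= c2 / c1].  Unbounded gaps of [S] make [q - p] arbitrarily
    large. *)

Lemma probability_trivIset_lbound d (T : measurableType d) (R : realType)
    (P : probability T R) (F : nat -> set T) (c : R) :
  0 < c -> (forall k, measurable (F k)) -> trivIset setT F ->
  ~ (forall k, (c%:E <= P (F k))%E).
Proof.
move=> c_gt0 mF tF PF.
pose N := Num.bound c^-1.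
have N_large : 1 < N%:R * c.
  by rewrite -ltr_pdivrMr // div1r archi_boundP // invr_ge0 ltW.
have mU : measurable (\big[setU/set0]_(i < N) F i).
  by apply: bigsetU_measurable => i _; exact: mF.
suff : ((N%:R * c)%:E <= 1)%E by rewrite lee_fin leNgt N_large.
apply: le_trans (probability_le1 P mU); rewrite measure_bigsetU //.
have -> : (N%:R * c)%:E = (\sum_(i < N) c%:E)%E.
  by rewrite sumEFin sumr_const card_ord mulr_natl.
by apply: lee_sum => i _; exact: PF.
Qed.

Lemma probability_le_on_full d (T : measurableType d) (R : realType)
    (P : probability T R) (X A B : set T) :
  measurable X -> measurable A -> measurable B -> P X = 1%E ->
  X `&` A `<=` B -> (P A <= P B)%E.
Proof.
move=> mX mA mB PX XAB; have mCX : measurable (~` X) by exact: measurableC.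
have PCX : P (~` X) = 0%E by rewrite probability_setC // PX subee.
rewrite -(measureU0 mB mCX PCX).
apply: le_measure; rewrite ?inE //; first exact: measurableU.
by move=> x Ax; have [Xx|] := pselect (X x); [left; exact: XAB|right].
Qed.

Lemma powR2_unbounded (R : realType) (h K : R) : 0 < h ->
  exists M : nat, forall g : nat, (M <= g)%N -> K < powR 2 (g%:R * h).
Proof.
move=> h_gt0; have hl_gt0 : 0 < h * ln 2 by rewrite mulr_gt0 // ln_gt0 ?ltr1n.
exists (Num.bound (`|K| / (h * ln 2))) => g Mg.
have K_lt : `|K| < g%:R * (h * ln 2).
  have K_ge0 : 0 <= `|K| / (h * ln 2) by rewrite divr_ge0 // ltW.
  by rewrite -ltr_pdivrMr //; apply: lt_le_trans (archi_boundP K_ge0) _; rewrite ler_nat.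
rewrite /powR pnatr_eq0 /=.
apply: lt_le_trans (expR_ge1Dx _); rewrite -mulrA.
by have := ler_norm K; lra.
Qed.

Definition determined_by (F : seq int) (P : set fullshift) :=
  forall x y : fullshift, {in F, forall k, y k = x k} -> P x -> P y.

Lemma determined_by_open F P : determined_by F P -> open P.
Proof.
move=> FP; rewrite openE => x Px.
suff : nbhs x [set y : fullshift | {in F, forall k, y k = x k}].
  by apply: filterS => y /FP; apply.
elim: F {FP} => [|a F IH]; first by apply: filterS filterT => y _ k.
have xa : nbhs x [set y : fullshift | y a = x a].
  exact: (@proj_continuous int (fun _ => bool) a x [set x a]).
apply: filterS (filterI xa IH) => y [ya yF] k.
by rewrite in_cons => /orP[/eqP->|/yF].
Qed.

Lemma determined_by_closed F P : determined_by F P -> closed P.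
Proof.
move=> FP; rewrite -openC; apply: (@determined_by_open F) => x y xy nPx Py.
by apply: nPx; apply: FP Py => k /xy.
Qed.

Lemma closed_borel_measurable (P : set fullshift) :
  closed P -> measurable (P : set borel_fullshift).
Proof.
move=> cP; rewrite -[P]setCK; apply: measurableC; apply: sub_sigma_algebra.
by rewrite openC.
Qed.

Lemma cylinder_measurable r (w : r.-tuple bool) :
  measurable (cylinder w : set borel_fullshift).
Proof.
apply: sub_sigma_algebra.
apply: (@determined_by_open [seq (val i)%:Z | i <- enum 'I_r]) => x y xy Px i.
by rewrite xy ?Px //; apply/mapP; exists i; rewrite ?mem_enum.
Qed.

Lemma gap_shift_closed (S : set nat) : closed (gap_shift S).
Proof.
have -> : gap_shift S = \bigcap_(p in [set: int * int])
   [set x : fullshift | p.1 < p.2 -> x p.1 = true -> x p.2 = true ->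
     (forall k : int, p.1 < k -> k < p.2 -> x k = false) ->
     S (absz (p.2 - p.1 - 1)%R) ].
  apply/seteqP; split => x Xx; first by move=> [i j] _; exact: Xx.
  by move=> i j; exact: (Xx (i, j)).
apply: closed_bigI => -[i j] _ /=.
pose seg := [seq i + m%:Z | m <- iota 0 (absz (j - i)).+1].
have seg_mem k : i <= k <= j -> k \in seg.
  by move=> /andP[ik kj]; apply/mapP; exists (absz (k - i)); rewrite ?mem_iota; lia.
apply: (@determined_by_closed seg) => x y xy Px ij yi yj yk.
have eq_xy k : i <= k <= j -> y k = x k by move/seg_mem/xy.
apply: Px => //; rewrite -?eq_xy ?lexx ?ltW //.
by move=> k ik kj; rewrite -eq_xy ?ltW ?ik //; exact: yk.
Qed.

Definition unit_word (r a : nat) : r.-tuple bool := [tuple val i == a | i < r].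

Lemma cylinder_unit_wordP r a (x : fullshift) :
  cylinder (unit_word r a) x <-> forall m, (m < r)%N -> x m%:Z = (m == a).
Proof.
split => [xw m mr|xw i]; last by rewrite tnth_mktuple xw.
by have := xw (Ordinal mr); rewrite tnth_mktuple.
Qed.

Lemma unit_word_language (S : set nat) r a :
  unit_word r a \in language (gap_shift S) r.
Proof.
rewrite inE; apply/asboolP; exists (fun k : int => k == a%:Z).
  by move=> i j ij /eqP ia /eqP ja; rewrite ia ja ltxx in ij.
by exists 0 => i; rewrite add0r tnth_mktuple eqz_nat.
Qed.

Lemma trivIset_cylinder_unit_word :
  trivIset setT (fun k => cylinder (unit_word k.+1 k)).
Proof.
move=> i j _ _ [x [/cylinder_unit_wordP xi /cylinder_unit_wordP xj]].
apply/eqP; wlog le_ij : i j xi xj / (i <= j)%N.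
  by move=> wlog; case: (leqP i j) => [|/ltnW] ?; [|rewrite eq_sym]; exact: wlog.
by rewrite -xj // xi.
Qed.

Lemma gap_shift_first_return (S : set nat) (x : fullshift) (m : nat) :
  gap_shift S x -> x 0 = true -> x m%:Z = true -> (0 < m)%N ->
  (forall k, (0 < k < m)%N -> x k%:Z = false) -> S m.-1.
Proof.
move=> Xx x0 xm m_gt0 x_zero.
have := Xx 0 m%:Z _ x0 xm; rewrite subr0 (_ : absz _ = m.-1); last by lia.
apply; first by rewrite ltz_nat.
by move=> k k_gt0 km; rewrite -[k]gez0_abs ?ltW // x_zero //; lia.
Qed.

Lemma gap_shift_zero_run (S : set nat) (p q : nat) :
  (forall s, S s -> ~ (p <= s < q)%N) ->
  gap_shift S `&` cylinder (unit_word p.+1 0) `<=` cylinder (unit_word q.+1 0).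
Proof.
move=> noS x [Xx /cylinder_unit_wordP xp]; apply/cylinder_unit_wordP => m mq.
have [mp|pm] := leqP m p; first exact: xp.
rewrite gtn_eqF; last exact: leq_ltn_trans pm.
apply/negbTE/negP => xm.
have ex_one : exists k, (0 < k)%N && x k%:Z by exists m; rewrite xm andbT; lia.
have [m0 /andP[m0_gt0 xm0] m0_min] := ex_minnP ex_one.
have m0_le : (m0 <= m)%N by apply: m0_min; rewrite xm andbT; lia.
have p_lt_m0 : (p < m0)%N.
  by rewrite ltnNge; apply/negP => /xp; rewrite xm0 gtn_eqF.
have S_m0 : S m0.-1.
  apply: (gap_shift_first_return Xx _ xm0 m0_gt0) => [|k /andP[k_gt0 km0]].
    exact: (xp 0%N).
  apply/negbTE/negP => xk.
  by have := m0_min k; rewrite k_gt0 xk => /(_ isT); rewrite leqNgt km0.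
by apply: (noS _ S_m0); lia.
Qed.

Lemma range_incr_gap (n : nat -> nat) : (forall i, (n i < n i.+1)%N) ->
  forall i s, range n s -> ~ ((n i).+1 <= s < n i.+1)%N.
Proof.
move=> n_incr i _ [t _ <-].
have n_mono := homo_leq leqnn leq_trans (fun k => ltnW (n_incr k)).
by case: (leqP t i) => [/n_mono|/n_mono]; lia.
Qed.

Section GibbsBounds.
Variables (R : realType) (S : set nat) (mu : probability borel_fullshift R).
Variables (h c1 c2 : R).
Hypothesis c1_gt0 : 0 < c1.
Hypothesis gibbs_lb : forall r (w : r.-tuple bool),
  w \in language (gap_shift S) r ->
  (c1%:E <= mu (cylinder w : set borel_fullshift) * (powR 2 (r%:R * h))%:E)%E.

Lemma gibbs_entropy_gt0 : 0 < h.
Proof.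
rewrite ltNge; apply/negP => h_le0.
apply: (probability_trivIset_lbound (P := mu) c1_gt0 _ trivIset_cylinder_unit_word).
  by move=> k; exact: cylinder_measurable.
move=> k; apply: le_trans (gibbs_lb (unit_word_language S k.+1 k)) _.
rewrite muleC; apply: gee_pMl; rewrite ?measure_ge0 // lee_fin -[leRHS](powRr0 2).
by apply: ler_powR; rewrite ?ler1n // mulr_ge0_le0.
Qed.

Hypothesis gibbs_ub : forall r (w : r.-tuple bool),
  w \in language (gap_shift S) r ->
  (mu (cylinder w : set borel_fullshift) * (powR 2 (r%:R * h))%:E <= c2%:E)%E.
Hypothesis gap_shift_full : mu (gap_shift S : set borel_fullshift) = 1%E.

Lemma gibbs_gap_bound (p q : nat) : (p <= q)%N ->
  (forall s, S s -> ~ (p <= s < q)%N) -> c1 * powR 2 ((q - p)%:R * h) <= c2.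
Proof.
move=> pq noS.
pose A := cylinder (unit_word p.+1 0) : set borel_fullshift.
pose B := cylinder (unit_word q.+1 0) : set borel_fullshift.
have mA : measurable A := cylinder_measurable _.
have mB : measurable B := cylinder_measurable _.
have AB : (mu A <= mu B)%E.
  have mX := closed_borel_measurable (@gap_shift_closed S).
  exact: probability_le_on_full mX mA mB gap_shift_full (gap_shift_zero_run noS).
have lbA := gibbs_lb (unit_word_language S p.+1 0).
have ubB := gibbs_ub (unit_word_language S q.+1 0).
rewrite -/A -/B in lbA ubB.
move: AB lbA ubB; rewrite -(fineK (fin_num_measure mu _ mA)).
rewrite -(fineK (fin_num_measure mu _ mB)) -!EFinM !lee_fin.
have pA_ge0 : 0 <= powR 2 (p.+1%:R * h) := powR_ge0 _ _.
have g_ge0 : 0 <= powR 2 ((q - p)%:R * h) := powR_ge0 _ _.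
have -> : powR 2 (q.+1%:R * h) = powR 2 (p.+1%:R * h) * powR 2 ((q - p)%:R * h).
  rewrite -powRD ?pnatr_eq0 ?implybT // -mulrDl -natrD.
  by congr (powR 2 (_%:R * h)); lia.
move=> AB lbA ubB; apply: le_trans ubB; apply: le_trans (ler_wpM2r g_ge0 lbA) _.
by rewrite mulrA; apply: ler_wpM2r => //; apply: ler_wpM2r.
Qed.

End GibbsBounds.

Theorem corollary3p16 (R : realType) (n : nat -> nat) :
  (forall i, (0 < n i)%N) ->
  (forall i, (n i < n i.+1)%N) ->
  (forall M : nat, exists i : nat, (M < n i.+1 - n i)%N) ->
  ~ exists mu : probability borel_fullshift R,
      gibbs_state (gap_shift (range n)) mu.
Proof.
move=> _ n_incr n_gaps [mu [muX [c1 [c2 [c1_gt0 [_ G]]]]]].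
have lb r w Hw := (G r w Hw).1; have ub r w Hw := (G r w Hw).2.
have h_gt0 := gibbs_entropy_gt0 c1_gt0 lb.
have [M powR_large] := powR2_unbounded (c2 / c1) h_gt0.
have [i gap_i] := n_gaps M.
have := gibbs_gap_bound c1_gt0 lb ub muX (n_incr i) (range_incr_gap n_incr (i := i)).
apply/negP; rewrite -ltNge -ltr_pdivrMl // mulrC.
by apply: powR_large; lia.
Qed.
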